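(* Let $K$ be a simplicial complex and $W\subset K$ a subcomplex. Let $$Z:=\{\tau\in K:\ \tau\cup\sigma\notin K\text{ for all }\sigma\in K\setminus W\}.$$ Then $O_K(Z)=Z$ and $Z=W\setminus\overline{K\setminus W}$.
   Context: A simplicial complex $K$ on a vertex set $S$ is a collection of subsets of $S$ (faces) closed under taking subsets (including $\varnothing$). For a subset $Z\subset K$, the closure $\overline Z$ is the smallest subcomplex of $K$ containing $Z$ (all subsets of elements of $Z$), and the open neighborhood is $O_K(Z)=\{\sigma\in K:\ \sigma\supseteq\tau\text{ for some }\tau\in Z\}$. *)

From mathcomp Require Import all_boot.
From mathcomp Require Export finmap.
Set Implicit Arguments. Unset Strict Implicit. Unset Printing Implicit Defensive.
Local Open Scope fset_scope.

Section Simplicial.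
Variable T : choiceType.

Definition family := {fset T} -> Prop.

Definition simplicial_complex (K : family) : Prop :=
  K fset0 /\ forall s t : {fset T}, K s -> t `<=` s -> K t.

Definition subcomplex (W K : family) : Prop :=
  simplicial_complex W /\ forall s, W s -> K s.

Definition fam_closure (Z : family) : family :=
  fun t => exists2 s, Z s & t `<=` s.

Definition open_nbhd (K Z : family) : family :=
  fun s => K s /\ exists2 t, Z t & t `<=` s.

Definition fam_diff (K W : family) : family := fun s => K s /\ ~ W s.

End Simplicial.

(* Z consists of the faces of K that cannot be joined to any face outside W.
   Enlarging a face within K keeps it unjoinable, so Z is upward closed in K.
   A face outside W would be joinable to itself, so Z lies in W; and a face of W
   lies below some face of K \ W exactly when it is joinable to one, because
   the union of a face with a face outside W is again outside W. *)

From mathcomp Require Import all_boot.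
From mathcomp Require Import finmap.
From Stdlib Require Import Classical.
Local Open Scope fset_scope.

Section Unjoinable.
Variable T : choiceType.
Implicit Types (K W S : {fset T} -> Prop) (s t : {fset T}).

Definition unjoinable K S : {fset T} -> Prop :=
  fun t => K t /\ forall sigma, S sigma -> ~ K (t `|` sigma).

Lemma open_nbhd_unjoinable K S s :
  (forall s t, K s -> t `<=` s -> K t) ->
  open_nbhd K (unjoinable K S) s <-> unjoinable K S s.
Proof.
move=> K_down; split.
- move=> [Ks [t [_ t_unj] ts]]; split=> // sigma Ssigma Ksigma.
  by apply: (t_unj sigma Ssigma); apply: K_down Ksigma _; apply: fsetSU.
- by move=> [Ks s_unj]; split=> //; exists s.
Qed.

Lemma unjoinable_diff_sub K W s : unjoinable K (fam_diff K W) s -> W s.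
Proof.
move=> [Ks s_unj]; apply: NNPP => nWs.
by apply: (s_unj s (conj Ks nWs)); rewrite fsetUid.
Qed.

Lemma unjoinable_notin_closure K S s :
  (forall s, S s -> K s) -> unjoinable K S s -> ~ fam_closure S s.
Proof.
move=> SK [_ s_unj] [sigma Ssigma s_sub].
by apply: (s_unj sigma Ssigma); rewrite (fsetUidPr _ _ s_sub); apply: SK.
Qed.

Lemma notin_closure_unjoinable K W s :
  (forall s t, W s -> t `<=` s -> W t) -> (forall s, W s -> K s) ->
  W s -> ~ fam_closure (fam_diff K W) s -> unjoinable K (fam_diff K W) s.
Proof.
move=> W_down WK Ws s_far; split; first exact: WK.
move=> sigma [_ nWsigma] Kjoin; apply: s_far; exists (s `|` sigma).
  by split=> // Wjoin; apply/nWsigma/(W_down _ _ Wjoin)/fsubsetUr.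
exact: fsubsetUl.
Qed.

End Unjoinable.

Theorem lemma3p4 (T : choiceType) (K W : {fset T} -> Prop) :
  simplicial_complex K -> subcomplex W K ->
  let Z : {fset T} -> Prop :=
    fun tau => K tau /\ forall sigma, fam_diff K W sigma -> ~ K (tau `|` sigma) in
  (forall s, open_nbhd K Z s <-> Z s) /\
  (forall s, Z s <-> (W s /\ ~ fam_closure (fam_diff K W) s)).
Proof.
move=> [_ K_down] [[_ W_down] WK] Z.
split=> s; first exact: open_nbhd_unjoinable.
split=> [Zs | [Ws s_far]]; last exact: notin_closure_unjoinable.
split; first exact: unjoinable_diff_sub Zs.
by apply: unjoinable_notin_closure Zs => t [].
Qed.
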